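(* For any two UEC-representatives $\mathcal{U},\mathcal{U}'$ on vertex set $[n]$ there is a finite sequence of UEC-representatives $\mathcal{U}=\mathcal{U}_0,\mathcal{U}_1,\dots,\mathcal{U}_r=\mathcal{U}'$ such that, for each $t$, some monomial representation of $\mathcal{U}_{t+1}$ is obtained from some monomial representation of $\mathcal{U}_t$ by a single within-fiber, out-of-fiber-add, out-of-fiber-delete, merge, or split move.
   Context: For a DAG $\mathcal{D}$, a trek is a path with no repeated vertices and no collider; the unconditional dependence graph $\mathcal{U}^\mathcal{D}$ has an edge between distinct $v,w$ iff there is a trek between them. A UEC-representative on $[n]$ is an undirected graph equal to $\mathcal{U}^\mathcal{D}$ for some DAG $\mathcal{D}$ on $[n]$. A monomial $x_{i_1|A_1}\cdots x_{i_k|A_k}$ (distinct $i_1,\dots,i_k\in[n]$, $A_j\subseteq[n]$, with $i_l\notin A_j$ for all $l,j$, and $\bigcup_j(\{i_j\}\cup A_j)=[n]$) determines the graph on $[n]$ in which distinct $v,w$ are adjacent iff both lie in some $\{i_j\}\cup A_j$; it is a monomial representation of a graph $\mathcal{U}$ if it determines $\mathcal{U}$ (for a UEC-representative, taking $\{i_1,\dots,i_k\}$ any maximum independent set and $A_j=\mathrm{ne}_\mathcal{U}(i_j)$ gives one). Moves on a monomial representation: within-fiber: replace a factor $x_{i|A}x_{j|B}$ by $x_{i|A\cup C}x_{j|B\setminus C}$ where $C\subseteq B\setminus A$; out-of-fiber-add: replace $x_{i_1|A_1}x_{i_2|A_2}$ by $x_{i_1|A_1}x_{i_2|A_2\cup\{c\}}$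 with $c\in A_1\setminus A_2$; out-of-fiber-delete: replace $x_{i_1|A_1}x_{i_2|A_2}$ by $x_{i_1|A_1}x_{i_2|A_2\setminus\{c\}}$ with $c\in A_1\cap A_2$; merge: replace $x_{i_1|A}x_{i_2|A}$ by $x_{i_1|A\cup\{i_2\}}$; split: if $c\in A_1$ and $c\notin A_j$ for all $j\neq1$, replace $x_{i_1|A_1}$ by $x_{i_1|A_1\setminus\{c\}}x_{c|A_1\setminus\{c\}}$. *)

From mathcomp Require Import all_boot.
Set Implicit Arguments. Unset Strict Implicit. Unset Printing Implicit Defensive.

(* A directed graph on [n] = 'I_n is an edge relation: D x y means x -> y.
   It is acyclic iff no edge x -> y admits a directed path from y back to x
   (in particular there are no self-loops). *)
Definition acyclic (n : nat) (D : rel 'I_n) : Prop :=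
  forall x y, D x y -> ~~ connect D y x.

Definition adjacent (n : nat) (D : rel 'I_n) (x y : 'I_n) : bool :=
  D x y || D y x.

(* no_collider D x y s : along the walk x, y, s_1, s_2, ..., no interior
   vertex (y, s_1, ...) is a collider a -> b <- c. *)
Fixpoint no_collider (n : nat) (D : rel 'I_n) (x y : 'I_n) (s : seq 'I_n)
  : bool :=
  match s with
  | [::] => true
  | z :: s' => ~~ (D x y && D z y) && no_collider D y z s'
  end.

Definition is_trek (n : nat) (D : rel 'I_n) (v : 'I_n) (s : seq 'I_n) : bool :=
  [&& uniq (v :: s), path (adjacent D) v s &
      match s with [::] => true | y :: s' => no_collider D v y s' end].

Definition udg (n : nat) (D : rel 'I_n) (v w : 'I_n) : Prop :=
  v != w /\ exists s, is_trek D v s /\ last v s = w.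

Definition UEC_rep (n : nat) (U : rel 'I_n) : Prop :=
  exists D : rel 'I_n, acyclic D /\ forall v w, U v w <-> udg D v w.

(* A factor x_{i|A} is the pair (i, A); a monomial is a finite list of
   factors, considered up to permutation (commutative product). *)
Definition factor (n : nat) := ('I_n * {set 'I_n})%type.
Definition monomial (n : nat) := seq (factor n).

Definition valid_monomial (n : nat) (m : monomial n) : Prop :=
  [/\ uniq (map fst m),
      (forall f g, f \in m -> g \in m -> f.1 \notin g.2) &
      (forall v : 'I_n, exists2 f, f \in m & v \in f.1 |: f.2)].

Definition mon_graph (n : nat) (m : monomial n) (v w : 'I_n) : bool :=
  (v != w) && has (fun f : factor n => (v \in f.1 |: f.2) && (w \in f.1 |: f.2)) m.

Definition mon_rep (n : nat) (m : monomial n) (U : rel 'I_n) : Prop :=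
  valid_monomial m /\ forall v w, mon_graph m v w = U v w.

Definition within_fiber (n : nat) (m m' : monomial n) : Prop :=
  exists (rest : monomial n) (i j : 'I_n) (A B C : {set 'I_n}),
    [/\ C \subset B :\: A,
        perm_eq m ((i, A) :: (j, B) :: rest) &
        perm_eq m' ((i, A :|: C) :: (j, B :\: C) :: rest)].

Definition out_of_fiber_add (n : nat) (m m' : monomial n) : Prop :=
  exists (rest : monomial n) (i1 i2 c : 'I_n) (A1 A2 : {set 'I_n}),
    [/\ c \in A1 :\: A2,
        perm_eq m ((i1, A1) :: (i2, A2) :: rest) &
        perm_eq m' ((i1, A1) :: (i2, c |: A2) :: rest)].

Definition out_of_fiber_delete (n : nat) (m m' : monomial n) : Prop :=
  exists (rest : monomial n) (i1 i2 c : 'I_n) (A1 A2 : {set 'I_n}),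
    [/\ c \in A1 :&: A2,
        perm_eq m ((i1, A1) :: (i2, A2) :: rest) &
        perm_eq m' ((i1, A1) :: (i2, A2 :\ c) :: rest)].

Definition merge_move (n : nat) (m m' : monomial n) : Prop :=
  exists (rest : monomial n) (i1 i2 : 'I_n) (A : {set 'I_n}),
    perm_eq m ((i1, A) :: (i2, A) :: rest) /\
    perm_eq m' ((i1, A :|: [set i2]) :: rest).

Definition split_move (n : nat) (m m' : monomial n) : Prop :=
  exists (rest : monomial n) (i1 c : 'I_n) (A1 : {set 'I_n}),
    [/\ c \in A1,
        (forall f, f \in rest -> c \notin f.2),
        perm_eq m ((i1, A1) :: rest) &
        perm_eq m' ((i1, A1 :\ c) :: (c, A1 :\ c) :: rest)].

Definition single_move (n : nat) (m m' : monomial n) : Prop :=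
  within_fiber m m' \/ out_of_fiber_add m m' \/ out_of_fiber_delete m m'
  \/ merge_move m m' \/ split_move m m'.

From mathcomp Require Import all_boot.
From Stdlib Require Import FunctionalExtensionality Relation_Operators Operators_Properties.
Set Implicit Arguments. Unset Strict Implicit. Unset Printing Implicit Defensive.

(* In U^D two vertices are adjacent exactly when they are distinct and have a
   common ancestor: a collider-free trek has a top vertex from which both ends
   are reached by directed paths, and conversely two directed paths leaving a
   common ancestor splice into a trek once they share no vertex but their
   start, which is reached by restarting from shared vertices.
   Hence the UEC-representatives are exactly the graphs of monomials: the
   sources of D together with their descendants form a monomial of U^D, and
   a monomial is the graph of its star DAG i_j -> A_j.
   The add/delete and merge/split moves come in mutually inverse pairs.  With
   add moves the set of one factor grows to the union of two factors' sets,
   then so does the other one, and the two equal factors merge; iterating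
   reduces every monomial to a single factor, whose graph is complete.  So
   every UEC-representative is connected to the complete graph, and any two
   are connected through it. *)

Lemma last_rev_belast (T : Type) (a : T) p : last (last a p) (rev (belast a p)) = a.
Proof. by case: p => //= b p; rewrite rev_cons last_rcons. Qed.

Definition collider_free n (D : rel 'I_n) (v : 'I_n) (s : seq 'I_n) : bool :=
  if s is y :: s' then no_collider D v y s' else true.

Section Treks.
Variables (n : nat) (D : rel 'I_n).

Lemma connect_neq_parent x y : connect D x y -> x != y -> exists u, D u y.
Proof.
case/connectP=> p; case/lastP: p => [_ -> /=|p z]; first by rewrite eqxx.
by rewrite rcons_path last_rcons => /andP[_ Dpz] ->; exists (last x p).
Qed.

Hypothesis D_acyclic : acyclic D.

Lemma acyclic_path_uniq a p : path D a p -> uniq (a :: p).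
Proof.
elim: p a => [//|b p IH] a /= /andP[Dab pb].
have /= -> := IH b pb; rewrite andbT.
apply/negP=> ap; have := path_connect pb ap.
by rewrite (negbTE (D_acyclic Dab)).
Qed.

Lemma path_no_collider x y s : path D y s -> no_collider D x y s.
Proof.
elim: s y x => [//|z s IH] y x /= /andP[Dyz pz].
rewrite IH // andbT; apply/negP => /andP[_ Dzy].
by have := D_acyclic Dyz; rewrite (connect1 Dzy).
Qed.

Lemma peak_collider_free v a t q :
  path (fun x y => D y x) v t -> last v t = a -> path D a q ->
  collider_free D v (t ++ q).
Proof.
elim: t v => [|y t IH] v /=.
  by move=> _ <-; case: q => [//|y s] /= /andP[_ /path_no_collider].
move=> /andP[Dyv pt] lt pq.
have := IH y pt lt pq; rewrite /collider_free; case: (t ++ q) => [//|z s] /= ->.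
rewrite andbT; apply/negP => /andP[Dvy _].
by have := D_acyclic Dyv; rewrite (connect1 Dvy).
Qed.

Lemma disjoint_paths_trek a p q :
  path D a p -> path D a q -> ~~ has (mem q) p ->
  is_trek D (last a p) (rev (belast a p) ++ q).
Proof.
move=> pp pq pq_disj.
have /= /andP[aq uq] := acyclic_path_uniq pq.
apply/and3P; split.
- have -> : last a p :: rev (belast a p) ++ q = rev (a :: p) ++ q.
    by rewrite (lastI a p) rev_rcons.
  rewrite cat_uniq rev_uniq acyclic_path_uniq //= uq andbT.
  apply/hasPn => x xq; rewrite mem_rev in_cons negb_or; apply/andP; split.
    by apply: contraNneq aq => <-.
  by apply: contraNN pq_disj => xp; apply/hasP; exists x.
- rewrite cat_path last_rev_belast rev_path.
  by rewrite !(sub_path _ pp) ?(sub_path _ pq) // => x y Dxy; rewrite /adjacent Dxy ?orbT.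
- apply: (peak_collider_free (a := a)) => //; last exact: last_rev_belast.
  by rewrite rev_path.
Qed.

Lemma common_ancestor_trek a p q : path D a p -> path D a q ->
  exists s, is_trek D (last a p) s /\ last (last a p) s = last a q.
Proof.
have [k] := ubnP (size p + size q); elim: k a p q => [//|k IH] a p q hk pp pq.
have [/hasP[b bp bq]|pq_disj] := boolP (has (mem q) p); last first.
  exists (rev (belast a p) ++ q); split; first exact: disjoint_paths_trek.
  by rewrite last_cat last_rev_belast.
(* restart from a common vertex b: the suffixes are shorter paths from b *)
move: pp pq hk; case/splitPr: bp => p1 p2; case/splitPr: bq => q1 q2.
rewrite !cat_path !last_cat /= => /and3P[_ _ pp2] /and3P[_ _ pq2] hk.
apply: IH pp2 pq2; rewrite !size_cat /= ltnS in hk; apply: leq_trans hk.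
by rewrite -addSn leq_add ?leq_addl // (leq_trans (leqnSn _)) ?leq_addl.
Qed.

(* The first conjunct carries the induction: a walk that leaves [x]
   forwards can never turn back, since that would create a collider. *)
Lemma walk_common_ancestor s x y :
  adjacent D x y -> path (adjacent D) y s -> no_collider D x y s ->
  (D x y -> connect D x (last y s)) /\
  exists a, connect D a x && connect D a (last y s).
Proof.
elim: s x y => [|z s IH] x y /=.
  move=> axy _ _; split; first exact: connect1.
  by case/orP: axy => [Dxy|Dyx]; [exists x | exists y]; rewrite connect0 connect1.
move=> axy /andP[ayz ps] /andP[nc ncs].
have [fwd_yz [a /andP[ay al]]] := IH y z ayz ps ncs.
have fwd_xy : D x y -> connect D x (last z s).
  move=> Dxy; have Dyz : D y z by case/orP: ayz => // Dzy; move: nc; rewrite Dxy Dzy.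
  exact: connect_trans (connect1 Dxy) (fwd_yz Dyz).
split=> //; have [Dxy|nDxy] := boolP (D x y).
  by exists x; rewrite connect0 fwd_xy.
have Dyx : D y x by move: axy; rewrite /adjacent (negbTE nDxy).
by exists a; rewrite al andbT (connect_trans ay (connect1 Dyx)).
Qed.

Lemma udg_common_ancestor v w :
  udg D v w <-> v != w /\ exists a, connect D a v && connect D a w.
Proof.
split.
  case=> vw [[|y s] [/and3P[_ ps nc] /= ls]]; first by rewrite ls eqxx in vw.
  move: ps => /= /andP[avy ps]; split=> //.
  have [_ [a anc]] := walk_common_ancestor avy ps nc; by exists a; rewrite -ls.
case=> vw [a /andP[/connectP[p pp ev] /connectP[q pq ew]]]; split=> //.
by rewrite ev ew; exact: common_ancestor_trek.
Qed.

Lemma source_ancestor v : exists2 s, [forall u, ~~ D u s] & connect D s v.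
Proof.
have [k] := ubnP #|[set u | connect D u v]|; elim: k v => [//|k IH] v hk.
have [|] := boolP [forall u, ~~ D u v]; first by exists v.
rewrite negb_forall => /existsP[u]; rewrite negbK => Duv.
have [|s hs su] := IH u; last by exists s => //; apply: connect_trans su (connect1 Duv).
(* u has strictly fewer ancestors than v: v itself is not one of them *)
apply: leq_trans (ltnSE hk); apply: proper_card; apply/properP; split.
  by apply/subsetP => x; rewrite !inE => xu; apply: connect_trans xu (connect1 Duv).
by exists v; rewrite !inE ?connect0 // (negbTE (D_acyclic Duv)).
Qed.

End Treks.

Section Monomials.
Variable n : nat.
Implicit Types (m : monomial n) (D U : rel 'I_n).

Lemma valid_monomialE m : valid_monomial m <->
  [/\ uniq (map fst m),
      (forall x g, x \in map fst m -> g \in m -> x \notin g.2) &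
      (forall v : 'I_n, exists2 f, f \in m & v \in f.1 |: f.2)].
Proof.
split; case=> h1 h2 h3; split=> //.
  by move=> x g /mapP[f fm ->]; apply: h2.
by move=> f g fm; apply/h2/map_f.
Qed.

Lemma uniq_map_fst_inj m f g :
  uniq (map fst m) -> f \in m -> g \in m -> f.1 = g.1 -> f = g.
Proof.
elim: m => [//|h m IH] /= /andP[hm um]; rewrite !in_cons.
case/orP=> [/eqP->|fm]; case/orP=> [/eqP->|gm] // e.
- by move: hm; rewrite e map_f.
- by move: hm; rewrite -e map_f.
- exact: IH.
Qed.

Definition sources D := [seq s <- enum 'I_n | [forall u, ~~ D u s]].

Definition descendant_monomial D : monomial n :=
  [seq (s, [set v | connect D s v] :\ s) | s <- sources D].

Lemma in_descendant_factor D s v :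
  (v \in s |: ([set u | connect D s u] :\ s)) = connect D s v.
Proof. by rewrite !inE; case: eqP => [->|]; rewrite ?connect0. Qed.

Lemma descendant_monomial_valid D : acyclic D -> valid_monomial (descendant_monomial D).
Proof.
move=> acD; apply/valid_monomialE; split.
- by rewrite -map_comp map_id filter_uniq // enum_uniq.
- move=> x g; rewrite -map_comp map_id mem_filter => /andP[/forallP x_src _].
  case/mapP=> s _ -> /=; rewrite !inE negb_and negbK.
  case: eqP => //= /eqP xs; apply/negP => sx; rewrite eq_sym in xs.
  by have [u Dux] := connect_neq_parent sx xs; have := x_src u; rewrite Dux.
- move=> v; have [s s_src sv] := source_ancestor acD v.
  exists (s, [set u | connect D s u] :\ s); last by rewrite in_descendant_factor.
  by apply: map_f; rewrite mem_filter s_src mem_enum.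
Qed.

Lemma descendant_monomial_graph D v w : acyclic D ->
  mon_graph (descendant_monomial D) v w =
  (v != w) && [exists a, connect D a v && connect D a w].
Proof.
move=> acD; rewrite /mon_graph has_map; congr (_ && _).
apply/hasP/existsP => [[s _]|[a /andP[av aw]]].
  by rewrite /preim /= !in_descendant_factor => anc; exists s.
have [s s_src sa] := source_ancestor acD a.
exists s; first by rewrite mem_filter s_src mem_enum.
by rewrite /preim /= !in_descendant_factor (connect_trans sa av) (connect_trans sa aw).
Qed.

Definition root_dag m : rel 'I_n :=
  fun x y => has (fun f : factor n => (f.1 == x) && (y \in f.2)) m.

Lemma root_dag_root m x y : root_dag m x y -> x \in map fst m.
Proof. by case/hasP=> f fm /andP[/eqP <- _]; apply: map_f. Qed.

Lemma root_dag_nonroot m x y : valid_monomial m -> root_dag m x y -> y \notin map fst m.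
Proof.
move/valid_monomialE=> [_ roots_out _] /hasP[f fm /andP[_ yf]].
by apply/negP => yr; move: (roots_out y f yr fm); rewrite yf.
Qed.

Lemma root_dag_connect m a v : valid_monomial m ->
  connect (root_dag m) a v -> a = v \/ root_dag m a v.
Proof.
move=> vm /connectP[[|b [|c p]] /=]; first by move=> _ ->; left.
  by rewrite andbT => Dab ->; right.
case/and3P=> Dab Dbc _ _.
by move: (root_dag_nonroot vm Dab); rewrite (root_dag_root Dbc).
Qed.

Lemma root_dag_acyclic m : valid_monomial m -> acyclic (root_dag m).
Proof.
move=> vm x y Dxy; apply/negP => /(root_dag_connect vm)[e|Dyx].
  by move: (root_dag_nonroot vm Dxy); rewrite e (root_dag_root Dxy).
by move: (root_dag_nonroot vm Dxy); rewrite (root_dag_root Dyx).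
Qed.

Lemma mon_graph_common_ancestor m v w : valid_monomial m ->
  mon_graph m v w <-> v != w /\ exists a, connect (root_dag m) a v && connect (root_dag m) a w.
Proof.
move=> vm; split.
  case/andP=> vw /hasP[f fm /andP[vf wf]]; split=> //; exists f.1.
  suff f_desc z : z \in f.1 |: f.2 -> connect (root_dag m) f.1 z by rewrite !f_desc.
  rewrite in_setU1 => /orP[/eqP->|zf]; first exact: connect0.
  by apply/connect1/hasP; exists f; rewrite ?eqxx.
case=> vw [a /andP[/(root_dag_connect vm) av /(root_dag_connect vm) aw]].
rewrite /mon_graph vw; have [um _ _] := (valid_monomialE m).1 vm.
case: av => [ev|/hasP[f fm /andP[/eqP fa vf]]];
  case: aw => [ew|/hasP[g gm /andP[/eqP ga wg]]].
- by move: vw; rewrite -ev -ew eqxx.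
- by apply/hasP; exists g; rewrite // ga -ev setU11 in_setU1 wg orbT.
- by apply/hasP; exists f; rewrite // fa -ew setU11 in_setU1 vf orbT.
- have efg := uniq_map_fst_inj um fm gm (etrans fa (esym ga)); subst g.
  by apply/hasP; exists f; rewrite // !in_setU1 vf wg !orbT.
Qed.

Lemma UEC_rep_mon_rep U : UEC_rep U <-> exists m, mon_rep m U.
Proof.
split=> [[D [acD UD]]|[m [vm Um]]].
  exists (descendant_monomial D); split; first exact: descendant_monomial_valid.
  move=> v w; rewrite descendant_monomial_graph //; apply/idP/idP.
    by case/andP=> vw /existsP anc; apply/UD/(udg_common_ancestor acD).
  by move/UD/(udg_common_ancestor acD) => [-> /existsP].
exists (root_dag m); split; first exact: root_dag_acyclic.
move=> v w; rewrite -Um; apply: iff_trans (mon_graph_common_ancestor v w vm) _.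
exact: iff_sym (udg_common_ancestor (root_dag_acyclic vm) v w).
Qed.

End Monomials.

Lemma relext (T : Type) (U V : rel T) : U =2 V -> U = V.
Proof. by move=> UV; do 2![apply: functional_extensionality => ?]; apply: UV. Qed.

Definition complete_graph n : rel 'I_n := fun v w => v != w.

Definition move_step n (U V : rel 'I_n) : Prop :=
  exists m m' : monomial n, [/\ mon_rep m U, mon_rep m' V & single_move m m'].

Definition move_equiv n (U V : rel 'I_n) : Prop :=
  clos_refl_trans _ (@move_step n) U V /\ clos_refl_trans _ (@move_step n) V U.

Section Moves.
Variable n : nat.
Implicit Types (m : monomial n) (U V W : rel 'I_n).

Lemma mon_repE m U : mon_rep m U -> U = mon_graph m.
Proof. by case=> _ Um; apply: relext => v w; rewrite Um. Qed.

Lemma move_equiv_refl U : move_equiv U U.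
Proof. by split; apply: rt_refl. Qed.

Lemma move_equiv_trans U V W : move_equiv U V -> move_equiv V W -> move_equiv U W.
Proof. by case=> UV VU [VW WV]; split; [apply: rt_trans VW | apply: rt_trans VU]. Qed.

Lemma move_equiv_graph m m' :
  valid_monomial m -> valid_monomial m' -> single_move m m' -> single_move m' m ->
  move_equiv (mon_graph m) (mon_graph m').
Proof. by move=> vm vm' mm' m'm; split; apply: rt_step; [exists m, m' | exists m', m]. Qed.

Lemma valid_monomial_perm m m' : perm_eq m m' -> valid_monomial m -> valid_monomial m'.
Proof.
move=> pm /valid_monomialE[h1 h2 h3]; apply/valid_monomialE; split.
- by rewrite -(perm_uniq (perm_map fst pm)).
- by move=> x g; rewrite -(perm_mem (perm_map fst pm)) -(perm_mem pm); apply: h2.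
- by move=> v; have [f fm vf] := h3 v; exists f; rewrite -?(perm_mem pm).
Qed.

Lemma mon_graph_perm m m' : perm_eq m m' -> mon_graph m = mon_graph m'.
Proof. by move=> pm; apply: relext => v w; rewrite /mon_graph (perm_has _ pm). Qed.

Lemma valid_monomial_grow rest i1 i2 (A1 A2 B : {set 'I_n}) :
  valid_monomial ((i1, A1) :: (i2, A2) :: rest) ->
  A2 \subset B -> B \subset A1 :|: A2 ->
  valid_monomial ((i1, A1) :: (i2, B) :: rest).
Proof.
move=> /valid_monomialE[h1 h2 h3] A2B BA; apply/valid_monomialE.
have -> : map fst ((i1, A1) :: (i2, B) :: rest) = map fst ((i1, A1) :: (i2, A2) :: rest)
  by [].
split=> [//|x g xr|v].
- rewrite !in_cons => /orP[/eqP->|/orP[/eqP->|gr]] /=.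
  + by apply: (h2 _ (i1, A1) xr); rewrite mem_head.
  + apply: contra (subsetP BA x) _; rewrite in_setU negb_or.
    by rewrite (h2 x (i1, A1)) ?(h2 x (i2, A2)) // !in_cons eqxx ?orbT.
  + by apply: (h2 _ _ xr); rewrite !in_cons gr !orbT.
- have [f fm vf] := h3 v; move: fm.
  rewrite !in_cons => /orP[/eqP ef|/orP[/eqP ef|fr]].
  + by exists f; rewrite // ef mem_head.
  + exists (i2, B); first by rewrite !in_cons eqxx orbT.
    by move: vf; rewrite ef !in_setU1 => /orP[->//|/(subsetP A2B)->]; rewrite orbT.
  + by exists f; rewrite // !in_cons fr !orbT.
Qed.

Lemma valid_monomial_merge rest i1 i2 (A : {set 'I_n}) :
  valid_monomial ((i1, A) :: (i2, A) :: rest) ->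
  valid_monomial ((i1, A :|: [set i2]) :: rest).
Proof.
move=> /valid_monomialE[/= /andP[] + /andP[i2r ur] h2 h3].
rewrite in_cons negb_or => /andP[i12 i1r].
have root_sub x : x \in i1 :: map fst rest -> x \in [:: i1, i2 & map fst rest].
  by rewrite !in_cons => /orP[]->; rewrite ?orbT.
apply/valid_monomialE; split=> [|x g xr|v]; first by rewrite /= i1r.
- rewrite in_cons => /orP[/eqP->|gr] /=; last first.
    by apply: (h2 _ _ (root_sub x xr)); rewrite !in_cons gr !orbT.
  rewrite in_setU in_set1 negb_or (h2 x (i1, A) (root_sub x xr) (mem_head _ _)) /=.
  by apply: contraTneq xr => ->; rewrite in_cons (negbTE i2r) orbF eq_sym.
- have [f fm vf] := h3 v; move: fm; rewrite !in_cons => /orP[/eqP ef|/orP[/eqP ef|fr]].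
  + exists (i1, A :|: [set i2]); first exact: mem_head.
    by move: vf; rewrite ef !in_setU1 in_setU => /orP[]->; rewrite ?orbT.
  + exists (i1, A :|: [set i2]); first exact: mem_head.
    by move: vf; rewrite ef !in_setU1 in_setU in_set1 => /orP[]->; rewrite ?orbT.
  + by exists f; rewrite // in_cons fr orbT.
Qed.

Lemma move_equiv_add rest i1 i2 (A1 A2 : {set 'I_n}) c :
  valid_monomial ((i1, A1) :: (i2, A2) :: rest) -> c \in A1 :\: A2 ->
  move_equiv (mon_graph ((i1, A1) :: (i2, A2) :: rest))
             (mon_graph ((i1, A1) :: (i2, c |: A2) :: rest)).
Proof.
move=> vm cA; have := cA; rewrite in_setD => /andP[cA2 cA1].
apply: (move_equiv_graph vm).
- by apply: valid_monomial_grow vm (subsetUr _ _) _; rewrite subUset sub1set in_setU cA1 subsetUr.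
- by right; left; exists rest, i1, i2, c, A1, A2.
do 2 right; left; exists rest, i1, i2, c, A1, (c |: A2).
by rewrite in_setI cA1 setU11 setU1K.
Qed.

Lemma move_equiv_merge rest i1 i2 (A : {set 'I_n}) :
  valid_monomial ((i1, A) :: (i2, A) :: rest) ->
  move_equiv (mon_graph ((i1, A) :: (i2, A) :: rest))
             (mon_graph ((i1, A :|: [set i2]) :: rest)).
Proof.
move=> vm; have [_ roots_out _] := (valid_monomialE _).1 vm.
have i2_root : i2 \in map fst ((i1, A) :: (i2, A) :: rest) by rewrite !in_cons eqxx orbT.
have i2A : i2 \notin A by apply: (roots_out _ (i1, A) i2_root); apply: mem_head.
apply: move_equiv_graph (valid_monomial_merge vm) _ _ => //.
  by do 3 right; left; exists rest, i1, i2, A.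
do 4 right; exists rest, i1, i2, (A :|: [set i2]); split.
- by rewrite in_setU in_set1 eqxx orbT.
- by move=> f fr; apply: (roots_out _ _ i2_root); rewrite !in_cons fr !orbT.
- exact: perm_refl.
- by rewrite setUC setU1K.
Qed.

Lemma move_equiv_grow rest i1 i2 (A1 A2 : {set 'I_n}) :
  valid_monomial ((i1, A1) :: (i2, A2) :: rest) ->
  move_equiv (mon_graph ((i1, A1) :: (i2, A2) :: rest))
             (mon_graph ((i1, A1) :: (i2, A1 :|: A2) :: rest)).
Proof.
have [k] := ubnP #|A1 :\: A2|; elim: k A2 => [//|k IH] A2 hk vm.
have [A1A2_0|[c cA]] := set_0Vmem (A1 :\: A2).
  have /setUidPr -> : A1 \subset A2 by rewrite -setD_eq0 A1A2_0.
  exact: move_equiv_refl.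
have := cA; rewrite in_setD => /andP[cA2 cA1].
have vm' : valid_monomial ((i1, A1) :: (i2, c |: A2) :: rest).
  by apply: valid_monomial_grow vm (subsetUr _ _) _; rewrite subUset sub1set in_setU cA1 subsetUr.
apply: move_equiv_trans (move_equiv_add vm cA) _.
have -> : A1 :|: A2 = A1 :|: (c |: A2).
  by rewrite setUA; congr (_ :|: _); apply/esym/setUidPl; rewrite sub1set.
apply: IH vm'; apply: leq_trans (ltnSE hk); apply: proper_card; apply/properP.
by split; [apply/setDS/subsetUr | exists c; rewrite // in_setD setU11].
Qed.

Lemma mon_graph_complete m : valid_monomial m -> size m <= 1 ->
  mon_graph m = @complete_graph n.
Proof.
case/valid_monomialE=> _ _ cover; case: m cover => [|f [|]] // cover _.
  by apply: relext => v; have [] := cover v.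
apply: relext => v w; rewrite /mon_graph /= orbF.
have [g + vf] := cover v; rewrite mem_seq1 => /eqP eg; subst g.
by have [h + wf] := cover w; rewrite mem_seq1 => /eqP eh; subst h; rewrite vf wf !andbT.
Qed.

Lemma move_equiv_complete m : valid_monomial m ->
  move_equiv (mon_graph m) (@complete_graph n).
Proof.
have [k] := ubnP (size m); elim: k m => [//|k IH] [|[i1 A1] [|[i2 A2] rest]] hk vm;
  try by rewrite mon_graph_complete //; apply: move_equiv_refl.
(* make both factors equal to (_, A1 :|: A2), then merge them *)
have vm1 := valid_monomial_grow vm (subsetUr A1 A2) (subxx _).
have swap : perm_eq ((i1, A1) :: (i2, A1 :|: A2) :: rest)
                    ((i2, A1 :|: A2) :: (i1, A1) :: rest).
  exact: (permEl (perm_catCA [:: _] [:: _] rest)).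
have vm2 := valid_monomial_perm swap vm1.
have vm3 := valid_monomial_grow vm2 (subsetUl A1 A2) (subsetUl _ _).
have A12 : (A1 :|: A2) :|: A1 = A1 :|: A2 by apply/setUidPl/subsetUl.
apply: move_equiv_trans (move_equiv_grow vm) _.
rewrite (mon_graph_perm swap).
apply: move_equiv_trans (move_equiv_grow vm2) _; rewrite A12.
apply: move_equiv_trans (move_equiv_merge vm3) (IH _ _ (valid_monomial_merge vm3)).
by rewrite ltnS in hk.
Qed.

Lemma UEC_rep_move_sequence U V :
  clos_refl_trans _ (@move_step n) U V -> UEC_rep U ->
  exists (r : nat) (G : nat -> rel 'I_n),
    [/\ G 0 = U, G r = V,
        (forall t, t <= r -> UEC_rep (G t)) &
        (forall t, t < r ->
           exists m m' : monomial n,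
             [/\ mon_rep m (G t), mon_rep m' (G t.+1) & single_move m m'])].
Proof.
move=> UV; elim: (clos_rt_rt1n _ _ _ _ UV) => {U V UV} [W|U1 V1 W1 UV _ IH] UEC_U.
  by exists 0, (fun _ => W); split=> // t; rewrite ?ltn0.
have [m [m' [_ rm' _]]] := UV.
have [r [G [G0 Gr G_UEC G_moves]]] := IH ((UEC_rep_mon_rep V1).2 (ex_intro _ m' rm')).
exists r.+1, (fun t => if t is t'.+1 then G t' else U1); split=> //.
  by case=> [//|t] /G_UEC.
by case=> [_|t /G_moves //]; rewrite /= G0.
Qed.

End Moves.

Theorem theorem4p6 (n : nat) (U U' : rel 'I_n) :
  UEC_rep U -> UEC_rep U' ->
  exists (r : nat) (G : nat -> rel 'I_n),
    [/\ G 0 = U, G r = U',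
        (forall t, t <= r -> UEC_rep (G t)) &
        (forall t, t < r ->
           exists m m' : monomial n,
             [/\ mon_rep m (G t), mon_rep m' (G t.+1) & single_move m m'])].
Proof.
move=> UEC_U UEC_U'.
have [m rm] := (UEC_rep_mon_rep U).1 UEC_U.
have [m' rm'] := (UEC_rep_mon_rep U').1 UEC_U'.
apply: UEC_rep_move_sequence UEC_U; rewrite (mon_repE rm) (mon_repE rm').
exact: rt_trans (move_equiv_complete rm.1).1 (move_equiv_complete rm'.1).2.
Qed.
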